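(* Let $\sigma>0$ and let $\mu_1,\dots,\mu_n,\mu_1^*,\dots,\mu_n^*\in\mathbb{R}$. Let $X_1,\dots,X_n$ be independent random variables with $X_i\sim \mathrm{Gum}(\mu_i,\sigma)$, and let $Y_1,\dots,Y_n$ be independent random variables with $Y_i\sim \mathrm{Gum}(\mu_i^*,\sigma)$, $i=1,\dots,n$. Let $X_{n:n}=\max\{X_1,\dots,X_n\}$ and $Y_{n:n}=\max\{Y_1,\dots,Y_n\}$. If $(\mu_1,\dots,\mu_n)\succeq^{m}(\mu_1^*,\dots,\mu_n^* )$, then $X_{n:n}\geq_{rh} Y_{n:n}$.
   Context: A random variable $X$ has the Gumbel distribution $\mathrm{Gum}(\mu,\sigma)$ (location $\mu\in\mathbb{R}$, scale $\sigma>0$) if its cumulative distribution function is $F(x)=e^{-e^{-(x-\mu)/\sigma}}$, $x\in\mathbb{R}$. Majorization: for $\mathbf{u},\mathbf{v}\in\mathbb{R}^n$ with components arranged in decreasing order $u_{(1)}\geq\dots\geq u_{(n)}$ and $v_{(1)}\geq\dots\geq v_{(n)}$, $\mathbf{u}\succeq^{m}\mathbf{v}$ means $\sum_{i=1}^k u_{(i)}\geq\sum_{i=1}^k v_{(i)}$ for $k=1,\dots,n-1$ and $\sum_{i=1}^n u_{(i)}=\sum_{i=1}^n v_{(i)}$. For a continuous random variable $X$ with density $f_X$ and cdf $F_X$, its reversed hazard rate is $\tilde r_X=f_X/F_X$; $X\leq_{rh}Y$ means $\tilde r_X(x)\leq\tilde r_Y(x)$ for all $x\in\mathbb{R}$,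 and $X\geq_{rh}Y$ means $Y\leq_{rh}X$. *)

From HB Require Import structures.
From mathcomp Require Import all_boot all_order all_algebra.
From mathcomp Require Import all_classical all_reals all_analysis.
Set Implicit Arguments. Unset Strict Implicit. Unset Printing Implicit Defensive.
Import Order.TTheory GRing.Theory Num.Theory.
Import numFieldNormedType.Exports.
Local Open Scope classical_set_scope.
Local Open Scope ring_scope.

Definition mutually_independent (R : realType) (d : measure_display)
  (T : measurableType d) (P : probability T R) (n : nat)
  (X : 'I_n -> {RV P >-> R}) : Prop :=
  forall (J : {set 'I_n}) (B : 'I_n -> set R),
    (forall i, measurable (B i)) ->
    P (\big[setI/setT]_(i in J) (X i @^-1` B i)) =
    (\prod_(i in J) P (X i @^-1` B i))%E.

Definition cdf_of (R : realType) (d : measure_display)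
  (T : measurableType d) (P : probability T R) (Z : T -> R) (x : R) : R :=
  fine (P [set w | Z w <= x]).

Definition gumbel_cdf (R : realType) (mu sigma x : R) : R :=
  expR (- expR (- ((x - mu) / sigma))).

Definition is_gumbel (R : realType) (d : measure_display)
  (T : measurableType d) (P : probability T R) (Z : T -> R) (mu sigma : R) : Prop :=
  forall x, cdf_of P Z x = gumbel_cdf mu sigma x.

Definition max_of (R : realType) (T : Type) (n : nat) (X : 'I_n.+1 -> T -> R)
  (w : T) : R := \big[Num.max/X ord0 w]_(i < n.+1) X i w.

Definition rev_hazard (R : realType) (F : R -> R) (x : R) : R :=
  derive1 F x / F x.

Definition rh_le (R : realType) (FX FY : R -> R) : Prop :=
  (forall x, derivable FX x 1) /\ (forall x, derivable FY x 1) /\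
  (forall x, rev_hazard FX x <= rev_hazard FY x).

Definition dec_sort (R : realType) (n : nat) (u : 'I_n -> R) : seq R :=
  sort (fun a b => b <= a) [seq u i | i <- enum 'I_n].

Definition majorizes (R : realType) (n : nat) (u v : 'I_n -> R) : Prop :=
  (forall k : nat, (1 <= k < n)%N ->
     \sum_(i < k) nth 0 (dec_sort v) i <= \sum_(i < k) nth 0 (dec_sort u) i) /\
  \sum_(i < n) u i = \sum_(i < n) v i.

From HB Require Import structures.
From mathcomp Require Import all_boot all_order all_algebra.
From mathcomp Require Import all_classical all_reals all_analysis.
Set Implicit Arguments. Unset Strict Implicit. Unset Printing Implicit Defensive.
Import Order.TTheory GRing.Theory Num.Theory.
Local Open Scope classical_set_scope.
Local Open Scope ring_scope.

(* By independence, the cdf of the maximum of independent Gum(mu_i, sigma)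
   variables is the product of their cdfs, which is again a Gumbel cdf with
   scale sigma and location sigma * ln (\sum_i exp (mu_i / sigma)).  The
   reversed hazard rate of Gum(m, sigma) at x is exp (-(x - m) / sigma) / sigma,
   increasing in m, so it suffices to compare the two locations, i.e. to show
   \sum_i exp (mus_i / sigma) <= \sum_i exp (mu_i / sigma).  That is Karamata's
   inequality for the convex function exp (. / sigma), proved here by Abel
   summation against the tangent-line inequality. *)

Section Majorization.
Variable R : realDomainType.

Lemma abel_sum_ge0 (m : nat) (c d : nat -> R) :
  (forall i, (i.+1 < m)%N -> c i.+1 <= c i) ->
  (forall k, (1 <= k < m)%N -> 0 <= \sum_(i < k) d i) ->
  \sum_(i < m) d i = 0 ->
  0 <= \sum_(i < m) c i * d i.
Proof.
move=> c_noninc d_partial_ge0 d_total.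
have partial k : (k < m)%N -> c k * \sum_(i < k) d i <= \sum_(i < k) c i * d i.
  elim: k => [|k IHk] ltkm; first by rewrite !big_ord0 mulr0.
  have ltkm' : (k < m)%N by apply: ltn_trans ltkm.
  have D_ge0 : 0 <= \sum_(i < k.+1) d i by apply: d_partial_ge0; rewrite ltkm.
  apply: le_trans (_ : c k * \sum_(i < k.+1) d i <= _).
    exact: (ler_wpM2r D_ge0 (c_noninc k ltkm)).
  by rewrite !big_ord_recr /= mulrDr lerD2r (IHk ltkm').
case: m c_noninc d_partial_ge0 d_total partial => [_ _ _ _|m _ _].
  by rewrite big_ord0.
rewrite !big_ord_recr /= => /eqP; rewrite addr_eq0 => /eqP d_head partial.
by have := lerD (partial m (ltnSn m)) (lexx (c m * d m)); rewrite d_head mulrN addNr.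
Qed.

Lemma karamata_subgradient (f g : R -> R) (m : nat) (a b : nat -> R) :
  (forall x y, f x + g x * (y - x) <= f y) ->
  {homo g : x y / x <= y} ->
  (forall i, (i.+1 < m)%N -> b i.+1 <= b i) ->
  (forall k, (1 <= k < m)%N -> \sum_(i < k) b i <= \sum_(i < k) a i) ->
  \sum_(i < m) a i = \sum_(i < m) b i ->
  \sum_(i < m) f (b i) <= \sum_(i < m) f (a i).
Proof.
move=> tangent g_homo b_noninc partial_le total_eq.
have abel : 0 <= \sum_(i < m) g (b i) * (a i - b i).
  apply: (abel_sum_ge0 (c := g \o b) (d := fun i => a i - b i)) => [i lt_im|k lt_km|].
  - exact/g_homo/b_noninc.
  - by rewrite sumrB subr_ge0 partial_le.
  - by rewrite sumrB total_eq subrr.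
rewrite -subr_ge0 -sumrB; apply: le_trans abel _; apply: ler_sum => i _.
by rewrite lerBrDr addrC tangent.
Qed.

End Majorization.

Section DecSort.
Variables (R : realType) (n : nat) (u : 'I_n -> R).

Lemma size_dec_sort : size (dec_sort u) = n.
Proof. by rewrite size_sort size_map size_enum_ord. Qed.

Lemma sum_dec_sort (f : R -> R) :
  \sum_(i < n) f (nth 0 (dec_sort u) i) = \sum_(i < n) f (u i).
Proof.
have -> : \sum_(i < n) f (nth 0 (dec_sort u) i) =
          \sum_(0 <= i < size (dec_sort u)) f (nth 0 (dec_sort u) i).
  by rewrite size_dec_sort big_mkord.
rewrite -(big_nth 0 xpredT f) (perm_big _ (permEl (perm_sort _ _))).
by rewrite big_map big_enum.
Qed.

Lemma dec_sort_noninc i :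
  (i.+1 < n)%N -> nth 0 (dec_sort u) i.+1 <= nth 0 (dec_sort u) i.
Proof.
move=> lt_in.
have ge_trans : transitive (fun a b : R => b <= a).
  by move=> y x z le_yx le_zy; exact: le_trans le_zy le_yx.
have ge_sorted : sorted (fun a b : R => b <= a) (dec_sort u).
  by apply: sort_sorted => a b; exact: le_total.
by apply: (sorted_ltn_nth ge_trans 0 ge_sorted); rewrite // inE size_dec_sort // ltnW.
Qed.

End DecSort.

Lemma majorizes_sum_le (R : realType) (n : nat) (f g : R -> R) (u v : 'I_n -> R) :
  (forall x y, f x + g x * (y - x) <= f y) ->
  {homo g : x y / x <= y} ->
  majorizes u v ->
  \sum_(i < n) f (v i) <= \sum_(i < n) f (u i).
Proof.
move=> tangent g_homo [partial_le total_eq].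
rewrite -(sum_dec_sort u) -(sum_dec_sort v).
apply: (karamata_subgradient (a := nth 0 (dec_sort u)) tangent g_homo) => //.
- by move=> i; exact: dec_sort_noninc.
- by rewrite (sum_dec_sort u id) (sum_dec_sort v id).
Qed.

Lemma majorizes_sum_expR (R : realType) (n : nat) (s : R) (u v : 'I_n -> R) :
  0 < s -> majorizes u v ->
  \sum_(i < n) expR (v i / s) <= \sum_(i < n) expR (u i / s).
Proof.
move=> s_gt0.
apply: (majorizes_sum_le (f := fun x => expR (x / s)) (g := fun x => expR (x / s) / s)).
- move=> x y.
  have := ler_wpM2l (ltW (expR_gt0 (x / s))) (expR_ge1Dx ((y - x) / s)).
  rewrite -expRD mulrDr mulr1 mulrA; congr (_ + _ <= expR _).
    by rewrite mulrAC.
  by rewrite -mulrDl addrC subrK.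
- move=> x y le_xy; rewrite ler_pM2r ?invr_gt0 // ler_expR.
  by rewrite ler_pM2r ?invr_gt0.
Qed.

Lemma bigsetIP (T : Type) (I : finType) (P : pred I) (F : I -> set T) (w : T) :
  (\big[setI/setT]_(i | P i) F i) w <-> (forall i, P i -> F i w).
Proof.
split=> [Fw j Pj|Fw]; first by move: Fw; rewrite (bigD1 j Pj) => -[].
by apply: (big_ind (fun A : set T => A w)) => // A B.
Qed.

Definition gumbel_max_location {R : realType} {n : nat} (s : R) (mu : 'I_n -> R) : R :=
  s * ln (\sum_i expR (mu i / s)).

Section Gumbel.
Variable R : realType.

Lemma gumbel_cdfE (m s x : R) :
  gumbel_cdf m s x = expR (- (expR (m / s) * expR (- (x / s)))).
Proof. by rewrite /gumbel_cdf -expRD mulrBl opprB. Qed.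

Lemma sum_expR_gt0 (n : nat) (f : 'I_n.+1 -> R) : 0 < \sum_i expR (f i).
Proof.
rewrite big_ord_recl ltr_wpDr ?expR_gt0 //.
by apply: sumr_ge0 => i _; exact: ltW (expR_gt0 _).
Qed.

Lemma prod_gumbel_cdf (n : nat) (s x : R) (mu : 'I_n.+1 -> R) : 0 < s ->
  \prod_i gumbel_cdf (mu i) s x = gumbel_cdf (gumbel_max_location s mu) s x.
Proof.
move=> s_gt0; rewrite gumbel_cdfE /gumbel_max_location mulrAC divff ?gt_eqF //.
rewrite mul1r lnK ?posrE ?sum_expR_gt0 // mulr_suml -sumrN expR_sum.
by apply: eq_bigr => i _; rewrite gumbel_cdfE.
Qed.

Lemma is_derive_gumbel_cdf (m s x : R) :
  is_derive x 1 (gumbel_cdf m s) (gumbel_cdf m s x * (expR (- ((x - m) / s)) / s)).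
Proof.
have lin : is_derive x 1 (fun y : R => - ((y - m) / s)) (- s^-1).
  by apply: is_derive_eq; rewrite scaler0 subr0 add0r; congr (- _); exact: mulr1.
have inner := is_derive1_comp (is_derive_expR _) lin.
apply: is_derive_eq (is_derive1_comp (is_derive_expR _) (is_deriveN inner)) _ => /=.
by rewrite !mulrN opprK.
Qed.

Lemma rev_hazard_gumbel_cdf (m s x : R) :
  rev_hazard (gumbel_cdf m s) x = expR (- ((x - m) / s)) / s.
Proof.
have [_ D_val] := is_derive_gumbel_cdf m s x.
rewrite /rev_hazard derive1E D_val.
by rewrite mulrC mulKf // gt_eqF // expR_gt0.
Qed.

Lemma rh_le_gumbel_cdf (m m' s : R) :
  0 < s -> m <= m' -> rh_le (gumbel_cdf m s) (gumbel_cdf m' s).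
Proof.
move=> s_gt0 le_mm'; split; [|split] => x.
- by have [] := is_derive_gumbel_cdf m s x.
- by have [] := is_derive_gumbel_cdf m' s x.
rewrite !rev_hazard_gumbel_cdf ler_pM2r ?invr_gt0 // ler_expR lerN2.
by rewrite ler_pM2r ?invr_gt0 // lerB.
Qed.

End Gumbel.

Section MaxOfIndependent.
Variables (R : realType) (d : measure_display) (T : measurableType d).
Variables (P : probability T R) (n : nat).

Lemma max_of_le (X : 'I_n.+1 -> T -> R) (w : T) (x : R) :
  max_of X w <= x <-> (forall i, X i w <= x).
Proof.
have /rwP bigmax_le := bigmax_leP (X ord0 w) x xpredT (fun i => X i w).
apply: iff_trans (iff_sym bigmax_le) _.
by split=> [[_ X_le] i|X_le]; [exact: X_le | split].
Qed.

Lemma cdf_of_max (X : 'I_n.+1 -> {RV P >-> R}) (x : R) :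
  mutually_independent X ->
  cdf_of P (max_of (fun i => X i : T -> R)) x = \prod_i cdf_of P (X i) x.
Proof.
move=> indep; pose Ix : set R := [set` `]-oo, x]].
have XIx i : X i @^-1` Ix = [set w | X i w <= x].
  by apply/seteqP; split=> w; rewrite /Ix /= in_itv.
have max_event : [set w | max_of (fun i => X i : T -> R) w <= x] =
    \big[setI/setT]_(i in [set: 'I_n.+1]%SET) (X i @^-1` Ix).
  apply/seteqP; split=> w /=.
  - by move/max_of_le => X_le; apply/bigsetIP => i _; rewrite XIx; exact: X_le.
  - move/bigsetIP => XIxw; apply/max_of_le => i.
    by have := XIxw i; rewrite XIx; apply; rewrite inE.
have /= indep_Ix := indep [set: 'I_n.+1]%SET (fun=> Ix) (fun=> measurable_itv _).
rewrite /cdf_of max_event indep_Ix.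
have fin_XIx i : P (X i @^-1` Ix) = (fine (P (X i @^-1` Ix)))%:E.
  rewrite fineK // fin_num_measure //.
  by apply: measurable_funPTI; exact: measurable_itv.
under eq_bigr do rewrite fin_XIx.
by rewrite prodEFin /=; apply: eq_big => [i|i _]; rewrite ?inE ?XIx.
Qed.

Lemma cdf_of_max_gumbel (s : R) (mu : 'I_n.+1 -> R) (X : 'I_n.+1 -> {RV P >-> R}) :
  0 < s -> mutually_independent X -> (forall i, is_gumbel P (X i) (mu i) s) ->
  cdf_of P (max_of (fun i => X i : T -> R)) = gumbel_cdf (gumbel_max_location s mu) s.
Proof.
move=> s_gt0 indep X_gumbel; apply/funext => x.
by rewrite cdf_of_max // -prod_gumbel_cdf //; apply: eq_bigr => i _; exact: X_gumbel.
Qed.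

End MaxOfIndependent.

Theorem theorem3p2 (R : realType) (d : measure_display) (T : measurableType d)
  (P : probability T R) (n : nat) (sigma : R) (mu mus : 'I_n.+1 -> R)
  (X Y : 'I_n.+1 -> {RV P >-> R}) :
  0 < sigma ->
  mutually_independent X ->
  mutually_independent Y ->
  (forall i, is_gumbel P (X i) (mu i) sigma) ->
  (forall i, is_gumbel P (Y i) (mus i) sigma) ->
  majorizes mu mus ->
  rh_le (cdf_of P (max_of (fun i => (Y i : T -> R))))
        (cdf_of P (max_of (fun i => (X i : T -> R)))).
Proof.
move=> sigma_gt0 indepX indepY X_gumbel Y_gumbel maj.
rewrite (cdf_of_max_gumbel sigma_gt0 indepX X_gumbel).
rewrite (cdf_of_max_gumbel sigma_gt0 indepY Y_gumbel).
apply: rh_le_gumbel_cdf => //.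
rewrite /gumbel_max_location ler_pM2l // ler_ln ?posrE ?sum_expR_gt0 //.
exact: majorizes_sum_expR.
Qed.
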